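(* Let $k\in\mathbb{N}$ and $\widetilde{M}_k=\{(x,y,z)\in\mathbb{C}^3 : x^2+y^2+z^{k+1}=0\}$, with coordinate ring $\mathbb{C}[\widetilde{M}_k]$ and holomorphic symplectic form $\widetilde{\omega}=\frac{dx\wedge dy}{(k+1)z^k}=\frac{dy\wedge dz}{2x}=\frac{dz\wedge dx}{2y}$ on $\widetilde{M}_k\setminus\{0\}$. Define the tangent vector fields \begin{align*} \widetilde{V}^x&=(k+1)z^k\partial_y-2y\partial_z,\quad \widetilde{V}^y=-(k+1)z^k\partial_x+2x\partial_z,\quad \widetilde{V}^z=2y\partial_x-2x\partial_y,\\ \widetilde{\Lambda}&=(k+1)x\partial_x+(k+1)y\partial_y+2z\partial_z. \end{align*} Then the space of polynomial vector fields on $\widetilde{M}_k$ equals \[ \big(\mathbb{C}[\widetilde{M}_k]\widetilde{V}^x+\mathbb{C}[\widetilde{M}_k]\widetilde{V}^y+\mathbb{C}[\widetilde{M}_k]\widetilde{V}^z\big)\oplus\mathrm{span}_{\mathbb{C}}\{1,z,\dots,z^{k-1}\}\cdot\widetilde{\Lambda}, \] the vector fields $\widetilde{V}^x,\widetilde{V}^y,\widetilde{V}^z$ are Hamiltonian with respect to $\widetilde{\omega}$ on $\widetilde{M}_k\setminus\{0\}$, and $\widetilde{\Lambda}$ is not a holomorphic symplectic vector field.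
   Context: Polynomial vector fields on an affine variety are the (restrictions to it of) polynomial vector fields on $\mathbb{C}^3$ tangent to it, i.e. derivations of the coordinate ring. A vector field $V$ is Hamiltonian if $i_V\widetilde{\omega}$ is exact on the regular part, and symplectic if $i_V\widetilde{\omega}$ is closed there. *)

From HB Require Import structures.
From mathcomp Require Import all_boot all_order all_algebra.
From mathcomp Require Import mpoly.
Set Implicit Arguments. Unset Strict Implicit. Unset Printing Implicit Defensive.
Import Order.TTheory GRing.Theory Num.Theory.
Local Open Scope ring_scope.

(* Coordinates on F^3: index 0 = x, 1 = y, 2 = z.
   F is an algebraically closed field of characteristic 0 with a numeric
   structure (e.g. the complex numbers). *)

Section Defs.
Variable F : numClosedFieldType.

Notation P := {mpoly F[3]}.
Definition pt := 'I_3 -> F.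
Definition vfield := 'I_3 -> P.
Definition form1 := ((('I_3 -> P) * P)%type).  (* rational 1-form (sum_j g_j dx_j) / D *)
Definition form2 := ((('I_3 -> 'I_3 -> P) * P)%type).
  (* rational 2-form (sum_{i,j} b_ij dx_i (x) dx_j) / D, b antisymmetric *)

Definition i0 : 'I_3 := @Ordinal 3 0 isT.
Definition i1 : 'I_3 := @Ordinal 3 1 isT.
Definition i2 : 'I_3 := @Ordinal 3 2 isT.
Definition xP : P := 'X_i0.
Definition yP : P := 'X_i1.
Definition zP : P := 'X_i2.

Definition fk (k : nat) : P := xP ^+ 2 + yP ^+ 2 + zP ^+ k.+1.

Definition onM (k : nat) (p : pt) : Prop := (fk k).@[p] = 0.

Definition dpol (g : P) (p : pt) (U : pt) : F :=
  \sum_(i < 3) (mderiv i g).@[p] * U i.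

Definition tangent_at (k : nat) (p U : pt) : Prop := dpol (fk k) p U = 0.

Definition vf_at (V : vfield) (p : pt) : pt := fun i => (V i).@[p].

Definition vf_act (V : vfield) (g : P) : P := \sum_(i < 3) V i * mderiv i g.

(* V is tangent to M_k (i.e. induces a derivation of C[M_k]) *)
Definition tangent_vf (k : nat) (V : vfield) : Prop :=
  forall p, onM k p -> (vf_act V (fk k)).@[p] = 0.

Definition eqOnM (k : nat) (V W : vfield) : Prop :=
  forall p, onM k p -> vf_at V p = vf_at W p.

Definition vf_add (V W : vfield) : vfield := fun i => V i + W i.
Definition vf_scale (g : P) (V : vfield) : vfield := fun i => g * V i.

Definition mk3 (a b c : P) : vfield :=
  fun i => if i == i0 then a else if i == i1 then b else c.

Definition Vx (k : nat) : vfield := mk3 0 ((k.+1)%:R * zP ^+ k) (- (2%:R * yP)).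
Definition Vy (k : nat) : vfield := mk3 (- ((k.+1)%:R * zP ^+ k)) 0 (2%:R * xP).
Definition Vz (k : nat) : vfield := mk3 (2%:R * yP) (- (2%:R * xP)) 0.
Definition Lam (k : nat) : vfield :=
  mk3 ((k.+1)%:R * xP) ((k.+1)%:R * yP) (2%:R * zP).

Definition zpoly (k : nat) (c : 'I_k -> F) : P :=
  \sum_(i < k) (c i)%:MP * zP ^+ i.

(* dx_i /\ dx_j as an antisymmetric bilinear coefficient array *)
Definition wedge (i j : 'I_3) : 'I_3 -> 'I_3 -> P :=
  fun a b => ((a == i) && (b == j))%:R - ((a == j) && (b == i))%:R.

(* The symplectic form omega on the three charts of M_k \ {0}:
   chart 0 (x <> 0): dy/\dz / (2x); chart 1 (y <> 0): dz/\dx / (2y);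
   chart 2 (z <> 0): dx/\dy / ((k+1) z^k). *)
Definition omega_chart (k : nat) (c : 'I_3) : form2 :=
  if c == i0 then (wedge i1 i2, 2%:R * xP)
  else if c == i1 then (wedge i2 i0, 2%:R * yP)
  else (wedge i0 i1, (k.+1)%:R * zP ^+ k).

Definition interior (V : vfield) (b : form2) : form1 :=
  (fun j => \sum_(i < 3) V i * b.1 i j, b.2).

Definition form1_at (a : form1) (p U : pt) : F :=
  (\sum_(j < 3) (a.1 j).@[p] * U j) / a.2.@[p].

(* value at p on (U, W) of the exterior derivative of the rational 1-form
   a = g / D, i.e. d(g/D) = (dg)/D - (dD /\ g)/D^2 *)
Definition dform1_at (a : form1) (p U W : pt) : F :=
  let g := a.1 in let D := a.2 in
  (\sum_(i < 3) \sum_(j < 3) (mderiv i (g j)).@[p] * (U i * W j - U j * W i))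
    / D.@[p]
  - (dpol D p U * (\sum_(j < 3) (g j).@[p] * W j)
     - dpol D p W * (\sum_(j < 3) (g j).@[p] * U j)) / (D.@[p]) ^+ 2.

Definition in_chart (k : nat) (c : 'I_3) (p : pt) : Prop :=
  onM k p /\ p <> (fun _ => 0) /\ (omega_chart k c).2.@[p] != 0.

(* V is Hamiltonian: i_V omega is exact on M_k \ {0} (i_V omega = dH with
   H a regular function, which is the restriction of a polynomial) *)
Definition hamiltonian (k : nat) (V : vfield) : Prop :=
  exists H : P, forall c p, in_chart k c p ->
    forall U, tangent_at k p U ->
      form1_at (interior V (omega_chart k c)) p U = dpol H p U.

(* V is symplectic: i_V omega is closed on M_k \ {0} *)
Definition symplectic (k : nat) (V : vfield) : Prop :=
  forall c p, in_chart k c p ->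
    forall U W, tangent_at k p U -> tangent_at k p W ->
      dform1_at (interior V (omega_chart k c)) p U W = 0.

End Defs.

From HB Require Import structures.
From mathcomp Require Import all_boot all_order all_algebra.
From mathcomp Require Import mpoly.
From mathcomp Require Import ring.
From Stdlib Require Import FunctionalExtensionality.
Set Implicit Arguments. Unset Strict Implicit. Unset Printing Implicit Defensive.
Import Order.TTheory GRing.Theory Num.Theory.
Local Open Scope ring_scope.

(* Reducing with x^2 = -(y^2 + z^(k+1)), every polynomial restricts to M_k as
   x a(y, z) + b(y, z), and uniquely so, since (x, y, z) and (-x, y, z) both
   lie on M_k.  Written in this form, the tangency condition
   2x V_x + 2y V_y + (k+1) z^k V_z = 0 splits into two polynomial identities
   in y and z, which can be solved explicitly for coefficients g1, g2, g3 of
   V^x, V^y, V^z; what remains is a polynomial in z of degree < k times Lambda.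
   The same uniqueness, applied to the x-coefficient at y = 0, shows that the
   sum is direct.  On every chart i_{V^j} omega = - dx_j, so -x_j is a
   Hamiltonian for V^j, while d(i_Lambda omega) = L_Lambda omega = 2 omega,
   since Lambda is the weighted Euler field and omega has weight 2. *)

Lemma big_ord3 (V : nmodType) (f : 'I_3 -> V) :
  \sum_(i < 3) f i = f i0 + f i1 + f i2.
Proof.
rewrite !big_ord_recr big_ord0 /= add0r.
by congr (f _ + f _ + f _); apply/val_inj.
Qed.

Lemma ord3P (i : 'I_3) : [\/ i = i0, i = i1 | i = i2].
Proof.
case: i => [[|[|[|//]]] Hi]; [apply: Or31 | apply: Or32 | apply: Or33];
  exact/val_inj.
Qed.

Lemma eq_modulo (R : pzRingType) (e a b c : R) :
  e = 0 -> a - b = c * e -> a = b.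
Proof. by move=> -> /eqP; rewrite mulr0 subr_eq0 => /eqP. Qed.

Lemma poly_coef0_drop (R : nzSemiRingType) (p : {poly R}) :
  (p`_0)%:P + drop_poly 1 p * 'X = p.
Proof.
by apply/polyP => -[|i]; rewrite !coefE //= ?addr0 // add0r addn1.
Qed.

Lemma mulX_addC_eq0 (R : idomainType) (A Q : {poly R}) (c : R) :
  c != 0 -> 'X * A + c%:P * Q = 0 -> exists2 q, Q = q * 'X & A + c%:P * q = 0.
Proof.
move=> c0 eq0; have Q0 : Q`_0 = 0.
  move/(congr1 (coefp 0)): eq0 => /=; rewrite !coefE /= add0r.
  by move/eqP; rewrite mulf_eq0 (negbTE c0) => /eqP.
have eQ : Q = drop_poly 1 Q * 'X by rewrite -{1}[Q]poly_coef0_drop Q0 add0r.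
exists (drop_poly 1 Q) => //.
have : 'X * (A + c%:P * drop_poly 1 Q) = 0 by rewrite -eq0 {2}eQ; ring.
by move/eqP; rewrite mulf_eq0 polyX_eq0 => /eqP.
Qed.

Lemma mulXn_add_low_eq0 (R : nzRingType) k (p : {poly R}) (c : 'I_k -> R) :
  'X^k * p + \sum_(i < k) c i *: 'X^i = 0 -> forall i, c i = 0.
Proof.
move=> eq0 i; move/(congr1 (coefp i)): eq0 => /=.
rewrite coefD coefXnM ltn_ord add0r coef_sum coef0 => <-.
rewrite (bigD1 i) //= coefZ coefXn eqxx mulr1 big1 ?addr0 // => j ji.
by rewrite coefZ coefXn (inj_eq val_inj) eq_sym (negbTE ji) mulr0.
Qed.

Lemma poly_horner_eq0 (R : numDomainType) (q : {poly R}) :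
  (forall x, q.[x] = 0) -> q = 0.
Proof.
move=> q0; apply/eqP/negPn/negP => nz_q.
pose s := [seq i%:R : R | i <- iota 0 (size q)].
have /max_poly_roots : all (root q) s by apply/allP => x _; rewrite /root q0.
rewrite nz_q size_map size_iota ltnn map_inj_uniq ?iota_uniq //.
  by move/(_ isT isT).
by move=> i j /eqP; rewrite eqr_nat => /eqP.
Qed.

Lemma horner2_eq0 (R : numDomainType) (A : {poly {poly R}}) :
  (forall y z, A.[y, z] = 0) -> A = 0.
Proof.
move=> A0; apply/polyP => i; rewrite coef0; apply: poly_horner_eq0 => z.
have /polyP/(_ i) : map_poly (horner_eval z) A = 0.
  apply: poly_horner_eq0 => y.
  by rewrite -[y](hornerC y z) (horner_map (horner_eval z)); apply: A0.
by rewrite coef_map_id0 ?rmorph0 // coef0.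
Qed.

Definition horner_ringE :=
  (hornerMn, horner0, hornerC, hornerX, hornerD, hornerN, hornerM, horner_exp).

Lemma decomposition_identity (R : numFieldType)
    (K x y z t a0 a1 a2 b0 b1 b2 q al be T : R) :
  K != 0 ->
  x ^+ 2 + y ^+ 2 + z * t = 0 ->
  2 * b0 + 2 * y * a1 + K * t * a2 = 0 ->
  2 * (b1 - y * a0) + t * q = 0 ->
  K * b2 - 2 * z * a0 = q * y ->
  a0 = T + be * t + al * y ->
  let g1 := - (2^-1 * K^-1) * q - K^-1 * z * al + K^-1 * y * be in
  let g2 := 2^-1 * a2 - K^-1 * x * be in
  let g3 := - 2^-1 * a1 + 2^-1 * x * al in
  let h := K^-1 * T in
  [/\ x * a0 + b0 = - g2 * (K * t) + g3 * (2 * y) + h * (K * x),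
      x * a1 + b1 = g1 * (K * t) - g3 * (2 * x) + h * (K * y) &
      x * a2 + b2 = - g1 * (2 * y) + g2 * (2 * x) + h * (2 * z)].
Proof.
move=> K0 E eA eP eQ ea g1 g2 g3 h.
have -> : b0 = - (y * a1) - 2^-1 * K * t * a2.
  by apply: (@mulfI _ 2); rewrite ?pnatr_eq0 // -[2 * b0]subr0 -eA; field.
have -> : b1 = y * a0 - 2^-1 * t * q.
  by apply: (@mulfI _ 2); rewrite ?pnatr_eq0 // -[2 * b1]subr0 -eP; field.
have -> : b2 = K^-1 * (q * y + 2 * z * a0).
  by apply: (mulfI K0); rewrite -eQ; field.
rewrite /g1 /g2 /g3 /h ea; split.
- by field.
- by apply: (eq_modulo (c := al) E); field.
- by apply: (eq_modulo (c := 2 * K^-1 * be) E); field.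
Qed.

Section SurfaceMk.
Variable F : numClosedFieldType.
Local Notation P := {mpoly F[3]}.
(* Polynomials in y ('X) and z ('Y), evaluated as A.[y, z]. *)
Local Notation Pyz := {poly {poly F}}.
Implicit Types (p U : pt F) (V W : vfield F) (h g : P).

Lemma meval_xP p : (xP F).@[p] = p i0. Proof. exact: mevalXU. Qed.
Lemma meval_yP p : (yP F).@[p] = p i1. Proof. exact: mevalXU. Qed.
Lemma meval_zP p : (zP F).@[p] = p i2. Proof. exact: mevalXU. Qed.

Lemma mevalXn (h : P) n p : (h ^+ n).@[p] = h.@[p] ^+ n.
Proof. exact: rmorphXn. Qed.

Definition meval_ringE := (mevalMn, mevalD, mevalN, mevalM, mevalXn, meval0,
  meval1, mevalC, meval_xP, meval_yP, meval_zP).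

Lemma onM_coord k p : onM k p <-> p i0 ^+ 2 + p i1 ^+ 2 + p i2 ^+ k.+1 = 0.
Proof. by rewrite /onM /fk !meval_ringE. Qed.

Lemma mderivXU (i j : 'I_3) : mderiv i ('X_j : P) = ((j == i)%:R)%:MP.
Proof.
rewrite mderivX -mul_mpolyC mpolyC_nat mnm1E.
case: eqP => [->|_]; last by rewrite mul0r.
suff -> : (U_(i) - U_(i) = 0)%MM by rewrite mpolyX0 mulr1.
by apply/mnmP => l; rewrite !mnmE subnn.
Qed.

Lemma mderiv_nat (i : 'I_3) n : mderiv i (n%:R : P) = 0.
Proof. by rewrite -mpolyC_nat mderivC. Qed.

Lemma meval_mderivXn (i j : 'I_3) n p :
  (mderiv i (('X_j : P) ^+ n)).@[p] = (j == i)%:R * n%:R * p j ^+ n.-1.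
Proof.
elim: n => [|n IH]; first by rewrite expr0 -mpolyC1 mderivC rmorph0; ring.
rewrite exprS mderivM rmorphD !rmorphM /= IH mderivXU mevalC mevalXU.
case: n {IH} => [|n] /=; first by rewrite expr0 rmorph1; ring.
by rewrite rmorphXn /= mevalXU exprS -[n.+2]addn1 natrD; ring.
Qed.

Lemma dpol_fk k p U : dpol (fk F k) p U =
  2 * p i0 * U i0 + 2 * p i1 * U i1 + (k.+1)%:R * p i2 ^+ k * U i2.
Proof.
rewrite /dpol big_ord3 /fk !mderivD !mevalD !meval_mderivXn /=; ring.
Qed.

Lemma meval_vf_act V g p : (vf_act V g).@[p] = dpol g p (vf_at V p).
Proof.
rewrite /vf_act /dpol rmorph_sum; apply: eq_bigr => i _.
by rewrite rmorphM mulrC.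
Qed.

Lemma tangent_vfE k V :
  tangent_vf k V <-> forall p, onM k p -> tangent_at k p (vf_at V p).
Proof. by split=> tV p /tV; rewrite meval_vf_act. Qed.

Definition pt3 (x y z : F) : pt F := fun i => [:: x; y; z]`_i.

Lemma pt3_i0 x y z : pt3 x y z i0 = x. Proof. by []. Qed.
Lemma pt3_i1 x y z : pt3 x y z i1 = y. Proof. by []. Qed.
Lemma pt3_i2 x y z : pt3 x y z i2 = z. Proof. by []. Qed.

Definition fyz k : Pyz := 'X ^+ 2 + 'Y ^+ k.+1.

Lemma horner2_fyz k y z : (fyz k).[y, z] = y ^+ 2 + z ^+ k.+1.
Proof. by rewrite !horner_ringE. Qed.

Lemma fyz_neq0 k : fyz k != 0.
Proof.
apply: contra_neq (@oner_neq0 F) => f0.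
by have := horner2_fyz k 1 0; rewrite f0 !horner0 expr1n expr0n addr0.
Qed.

Definition xlinear_repr k (h : P) (a b : Pyz) : Prop :=
  forall p, onM k p -> h.@[p] = p i0 * a.[p i1, p i2] + b.[p i1, p i2].

Lemma xlinear_reprD k h g a b c d :
  xlinear_repr k h a b -> xlinear_repr k g c d ->
  xlinear_repr k (h + g) (a + c) (b + d).
Proof.
by move=> hab gcd p Mp; rewrite mevalD hab // gcd // !horner_ringE; ring.
Qed.

Lemma xlinear_reprM k h g a b c d :
  xlinear_repr k h a b -> xlinear_repr k g c d ->
  xlinear_repr k (h * g) (a * d + b * c) (b * d - fyz k * a * c).
Proof.
move=> hab gcd p /[dup] Mp /onM_coord M0.
rewrite mevalM hab // gcd // !horner_ringE.
by apply: (eq_modulo (c := a.[p i1, p i2] * c.[p i1, p i2]) M0); ring.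
Qed.

Lemma xlinear_reprC k c : xlinear_repr k c%:MP 0 c%:P%:P.
Proof. by move=> p _; rewrite mevalC !horner_ringE; ring. Qed.

Lemma xlinear_repr_xP k : xlinear_repr k (xP F) 1 0.
Proof. by move=> p _; rewrite meval_xP !horner_ringE; ring. Qed.

Lemma xlinear_repr_yP k : xlinear_repr k (yP F) 0 'X.
Proof. by move=> p _; rewrite meval_yP !horner_ringE; ring. Qed.

Lemma xlinear_repr_zP k : xlinear_repr k (zP F) 0 'Y.
Proof. by move=> p _; rewrite meval_zP !horner_ringE; ring. Qed.

Lemma xlinear_repr_exists k h : exists a b, xlinear_repr k h a b.
Proof.
pose R g := exists a b, xlinear_repr k g a b.
have RC c : R c%:MP by exists 0, c%:P%:P; apply: xlinear_reprC.
have RD g1 g2 : R g1 -> R g2 -> R (g1 + g2).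
  by move=> [a [b hab]] [c [d gcd]]; do 2!eexists; apply: xlinear_reprD hab gcd.
have RM g1 g2 : R g1 -> R g2 -> R (g1 * g2).
  by move=> [a [b hab]] [c [d gcd]]; do 2!eexists; apply: xlinear_reprM hab gcd.
have RX i : R 'X_i.
  by case: (ord3P i) => ->; do 2!eexists;
    [apply: xlinear_repr_xP | apply: xlinear_repr_yP | apply: xlinear_repr_zP].
rewrite (mpolyE h); apply: (big_ind R); [by rewrite -mpolyC0 | exact: RD |].
move=> m _; rewrite -mul_mpolyC mpolyXE_id; apply: (RM) => //.
apply: (big_ind R); [by rewrite -mpolyC1 | exact: RM | move=> i _].
by elim: (m i) => [|n IH]; rewrite ?expr0 -?mpolyC1 // exprS; apply: RM.
Qed.

Lemma xlinear_onM_eq0 k (A B : Pyz) :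
  (forall p, onM k p -> p i0 * A.[p i1, p i2] + B.[p i1, p i2] = 0) ->
  A = 0 /\ B = 0.
Proof.
move=> AB0; have AB0_yz y z : B.[y, z] = 0 /\ (fyz k * A).[y, z] = 0.
  pose x := sqrtC (- (y ^+ 2 + z ^+ k.+1)).
  have x2 : x ^+ 2 = - (y ^+ 2 + z ^+ k.+1) by rewrite sqrtCK.
  have AB0_at s : s ^+ 2 = x ^+ 2 -> s * A.[y, z] + B.[y, z] = 0.
    move=> s2; apply: (AB0 (pt3 s y z)); apply/onM_coord.
    by rewrite pt3_i0 pt3_i1 pt3_i2 s2 x2; ring.
  have := AB0_at x erefl; have := AB0_at (- x) (sqrrN x).
  set a := A.[y, z]; set b := B.[y, z] => ABm ABp.
  have b0 : b = 0.
    have -> : b = ((x * a + b) + (- x * a + b)) / 2 by field.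
    by rewrite ABp ABm addr0 mul0r.
  have xa0 : x * a = 0 by move: ABp; rewrite b0 addr0.
  split=> //; rewrite !hornerM horner2_fyz -/a.
  by rewrite -[y ^+ 2 + _]opprK -x2 expr2 mulNr -mulrA xa0 mulr0 oppr0.
have /eqP : fyz k * A = 0 by apply: horner2_eq0 => y z; case: (AB0_yz y z).
rewrite mulf_eq0 (negbTE (fyz_neq0 k)) => /eqP A0.
by split=> //; apply: horner2_eq0 => y z; case: (AB0_yz y z).
Qed.

Definition lift_yz (A : Pyz) : P :=
  \sum_(i < size A)
    (\sum_(j < size A`_i) (A`_i`_j)%:MP * zP F ^+ j) * yP F ^+ i.

Lemma meval_lift_yz A p : (lift_yz A).@[p] = A.[p i1, p i2].
Proof.
rewrite /lift_yz rmorph_sum /= (horner_coef A) horner_sum.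
apply: eq_bigr => i _.
rewrite mevalM rmorphXn /= meval_yP rmorph_sum /= !horner_ringE.
congr (_ * _); rewrite (horner_coef A`_i); apply: eq_bigr => j _.
by rewrite mevalM rmorphXn /= mevalC meval_zP.
Qed.

Lemma meval_zpoly k (c : 'I_k -> F) p :
  (zpoly c).@[p] = \sum_(i < k) c i * p i2 ^+ i.
Proof.
rewrite /zpoly rmorph_sum /=; apply: eq_bigr => i _.
by rewrite mevalM rmorphXn /= mevalC meval_zP.
Qed.

Lemma tangent_vf_xlinear_eqs k V a0 b0 a1 b1 a2 b2 :
  tangent_vf k V ->
  xlinear_repr k (V i0) a0 b0 -> xlinear_repr k (V i1) a1 b1 ->
  xlinear_repr k (V i2) a2 b2 ->
  2 * b0 + 2 * 'X * a1 + (k.+1)%:R * 'Y ^+ k * a2 = 0 /\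
  - (2 * fyz k * a0) + 2 * 'X * b1 + (k.+1)%:R * 'Y ^+ k * b2 = 0.
Proof.
move=> /tangent_vfE tV r0 r1 r2; apply: xlinear_onM_eq0 => p Mp.
have := tV p Mp; rewrite /tangent_at dpol_fk /vf_at r0 // r1 // r2 // => T0.
move/onM_coord: Mp => M0; rewrite -[RHS]T0 !horner_ringE.
by apply: (eq_modulo (c := - 2 * a0.[p i1, p i2]) M0); ring.
Qed.

(* g1 V^x + g2 V^y + g3 V^z is the cross product of grad f with (g1, g2, g3),
   hence tangent to M_k. *)
Definition Vcomb k (g1 g2 g3 : P) : vfield F :=
  vf_add (vf_add (vf_scale g1 (Vx F k)) (vf_scale g2 (Vy F k)))
         (vf_scale g3 (Vz F k)).

Lemma vf_at_Vcomb k g1 g2 g3 p : vf_at (Vcomb k g1 g2 g3) p =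
  pt3 (- g2.@[p] * ((k.+1)%:R * p i2 ^+ k) + g3.@[p] * (2 * p i1))
      (g1.@[p] * ((k.+1)%:R * p i2 ^+ k) - g3.@[p] * (2 * p i0))
      (- g1.@[p] * (2 * p i1) + g2.@[p] * (2 * p i0)).
Proof.
apply: functional_extensionality => i.
case: (ord3P i) => ->;
  rewrite /vf_at /Vcomb /vf_add /vf_scale /Vx /Vy /Vz /mk3 /=;
  by rewrite ?pt3_i0 ?pt3_i1 ?pt3_i2 !meval_ringE; ring.
Qed.

Lemma vf_at_zLam k h p : vf_at (vf_scale h (Lam F k)) p =
  pt3 (h.@[p] * ((k.+1)%:R * p i0)) (h.@[p] * ((k.+1)%:R * p i1))
      (h.@[p] * (2 * p i2)).
Proof.
apply: functional_extensionality => i.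
by case: (ord3P i) => ->; rewrite /vf_at /vf_scale /Lam /mk3 /= !meval_ringE.
Qed.

Lemma vf_at_add V W p i : vf_at (vf_add V W) p i = vf_at V p i + vf_at W p i.
Proof. exact: mevalD. Qed.

Lemma tangent_vf_decomp k V : tangent_vf k V ->
  exists g1 g2 g3 (c : 'I_k -> F),
    eqOnM k V (vf_add (Vcomb k g1 g2 g3) (vf_scale (zpoly c) (Lam F k))).
Proof.
move=> tV.
have [a0 [b0 r0]] := xlinear_repr_exists k (V i0).
have [a1 [b1 r1]] := xlinear_repr_exists k (V i1).
have [a2 [b2 r2]] := xlinear_repr_exists k (V i2).
have [eqA eqB] := tangent_vf_xlinear_eqs tV r0 r1 r2.
have [q eqQ eqP] : exists2 q, (k.+1)%:R * b2 - 2 * 'Y * a0 = q * 'X &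
                             2 * (b1 - 'X * a0) + 'Y ^+ k * q = 0.
  rewrite -rmorphXn; apply: mulX_addC_eq0; first exact/monic_neq0/monicXn.
  by rewrite rmorphXn -eqB /fyz (exprS 'Y); ring.
pose al := drop_poly 1 a0; pose be := drop_poly k a0`_0.
pose T := take_poly k a0`_0.
have eqa : a0 = T%:P + (be * 'X^k)%:P + al * 'X.
  by rewrite -rmorphD poly_take_drop poly_coef0_drop.
pose K : F := (k.+1)%:R.
exists (- (2^-1 * K^-1)%:MP * lift_yz q - (K^-1)%:MP * zP F * lift_yz al
        + (K^-1)%:MP * yP F * lift_yz be%:P).
exists ((2^-1)%:MP * lift_yz a2 - (K^-1)%:MP * xP F * lift_yz be%:P).
exists (- (2^-1)%:MP * lift_yz a1 + (2^-1)%:MP * xP F * lift_yz al).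
exists (fun i => K^-1 * a0`_0`_i).
move=> p /[dup] Mp /onM_coord; rewrite (exprS (p i2)) => M0.
have at_p (A B : Pyz) : A = B -> A.[p i1, p i2] = B.[p i1, p i2] by move->.
move: (at_p _ _ eqA) (at_p _ _ eqP) (at_p _ _ eqQ) (at_p _ _ eqa).
rewrite !horner_ringE => {}eqA {}eqP {}eqQ {}eqa.
have K0 : K != 0 by rewrite pnatr_eq0.
have /= [c0 c1 c2] := decomposition_identity K0 M0 eqA eqP eqQ eqa.
have zp : (zpoly (fun i : 'I_k => K^-1 * a0`_0`_i)).@[p] = K^-1 * T.[p i2].
  rewrite meval_zpoly (horner_coef_wide _ (size_take_poly _ _)) mulr_sumr.
  by apply: eq_bigr => j _; rewrite coef_take_poly ltn_ord mulrA.
apply: functional_extensionality => i.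
rewrite vf_at_add vf_at_Vcomb vf_at_zLam zp !meval_ringE !meval_lift_yz.
rewrite !horner_ringE.
case: (ord3P i) => ->; rewrite /vf_at ?pt3_i0 ?pt3_i1 ?pt3_i2.
- by rewrite r0 // c0; ring.
- by rewrite r1 // c1; ring.
- by rewrite r2 // c2; ring.
Qed.

Lemma tangent_vf_add k V W :
  tangent_vf k V -> tangent_vf k W -> tangent_vf k (vf_add V W).
Proof.
move=> tV tW p Mp; rewrite /vf_act /vf_add.
under eq_bigr do rewrite mulrDl.
by rewrite big_split mevalD tV // tW // addr0.
Qed.

Lemma eqOnM_tangent_vf k V W : eqOnM k V W -> tangent_vf k W -> tangent_vf k V.
Proof.
move=> VW /tangent_vfE tW; apply/tangent_vfE => p Mp.
by rewrite VW //; apply: tW.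
Qed.

Lemma tangent_Vcomb k g1 g2 g3 : tangent_vf k (Vcomb k g1 g2 g3).
Proof.
apply/tangent_vfE => p _.
by rewrite /tangent_at dpol_fk vf_at_Vcomb pt3_i0 pt3_i1 pt3_i2; ring.
Qed.

Lemma tangent_zLam k h : tangent_vf k (vf_scale h (Lam F k)).
Proof.
apply/tangent_vfE => p /onM_coord; rewrite (exprS (p i2)) => M0.
rewrite /tangent_at dpol_fk vf_at_zLam pt3_i0 pt3_i1 pt3_i2.
by apply: (eq_modulo (c := 2 * (k.+1)%:R * h.@[p]) M0); ring.
Qed.

Lemma Vcomb_zLam_direct k g1 g2 g3 (c : 'I_k -> F) :
  eqOnM k (Vcomb k g1 g2 g3) (vf_scale (zpoly c) (Lam F k)) ->
  eqOnM k (vf_scale (zpoly c) (Lam F k)) (fun _ => 0).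
Proof.
move=> eqV; suff c0 i : c i = 0.
  move=> p _; apply: functional_extensionality => i.
  rewrite /vf_at /vf_scale meval0 mevalM meval_zpoly big1 ?mul0r // => j _.
  by rewrite c0 mul0r.
have [a2 [b2 r2]] := xlinear_repr_exists k g2.
have [a3 [b3 r3]] := xlinear_repr_exists k g3.
pose C := \sum_(j < k) c j *: 'X^j : {poly F}.
have CE z : C.[z] = \sum_(j < k) c j * z ^+ j.
  by rewrite horner_sum; apply: eq_bigr => j _; rewrite hornerZ hornerXn.
have [A0 _] : 'X * a3 *+ 2 - (('X^k)%:P * a2 + C%:P) *+ k.+1 = 0 /\
              'X * b3 *+ 2 - ('X^k)%:P * b2 *+ k.+1 = 0.
  apply: xlinear_onM_eq0 => p Mp.
  move/(congr1 (fun U => U i0)): (eqV p Mp).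
  rewrite vf_at_Vcomb vf_at_zLam pt3_i0 pt3_i0 r2 // r3 // meval_zpoly -CE.
  move/eqP; rewrite -subr_eq0 => /eqP E.
  by rewrite !horner_ringE; apply: (eq_modulo (c := 1) E); ring.
move/(congr1 (coefp 0)): A0 => /=; rewrite !coefE /= mul0rn sub0r.
rewrite -mulr_natr -polyC_natr => /eqP; rewrite oppr_eq0 mulf_eq0 polyC_eq0.
by rewrite pnatr_eq0 orbF => /eqP /mulXn_add_low_eq0.
Qed.

Definition Vcoord k (j : 'I_3) : vfield F :=
  if j == i0 then Vx F k else if j == i1 then Vy F k else Vz F k.

Lemma interior_omega_Vcoord k j c p U :
  (omega_chart F k c).2.@[p] != 0 -> tangent_at k p U ->
  form1_at (interior (Vcoord k j) (omega_chart F k c)) p U = - U j.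
Proof.
rewrite /tangent_at dpol_fk /form1_at /= => D0 tU; apply: (canLR (mulfK D0)).
case: (ord3P j) => ->; case: (ord3P c) => ->;
  rewrite /interior /omega_chart /wedge /Vcoord /Vx /Vy /Vz /mk3 /=;
  rewrite !big_ord3 /= !meval_ringE;
  first [ring | by apply: (eq_modulo (c := 1) tU); ring
              | by apply: (eq_modulo (c := -1) tU); ring].
Qed.

Lemma dpol_NXU (j : 'I_3) p U : dpol (- 'X_j) p U = - U j.
Proof.
rewrite /dpol big_ord3 !mderivN !mderivXU !mevalN !mevalC.
by case: (ord3P j) => ->; rewrite /=; ring.
Qed.

Lemma hamiltonian_Vcoord k j : hamiltonian k (Vcoord k j).
Proof.
exists (- 'X_j) => c p [_ [_ D0]] U tU.
by rewrite dpol_NXU interior_omega_Vcoord.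
Qed.

(* d(i_Lambda omega)(U, W) = 2 omega(U, W) = 2 for the point p and the tangent
   vectors U, W chosen below. *)
Lemma Lam_not_symplectic k : ~ symplectic k (Lam F k).
Proof.
pose p := pt3 0 'i 1; pose U := pt3 1 0 0.
pose W := pt3 0 (k.+1)%:R (- (2 * 'i)).
have Mp : onM k p.
  apply/onM_coord; rewrite /p !(pt3_i0, pt3_i1, pt3_i2).
  by rewrite sqrCi expr1n expr0n /=; ring.
have p0 : p <> (fun _ => 0).
  by move/(congr1 (fun q => q i2)); rewrite /p pt3_i2 => /eqP; rewrite oner_eq0.
have D0 : (omega_chart F k i2).2.@[p] != 0.
  by rewrite /= !meval_ringE /p pt3_i2 expr1n mulr1 pnatr_eq0.
have tU : tangent_at k p U.
  by rewrite /tangent_at dpol_fk /p /U !(pt3_i0, pt3_i1, pt3_i2); ring.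
have tW : tangent_at k p W.
  by rewrite /tangent_at dpol_fk /p /W !(pt3_i0, pt3_i1, pt3_i2) expr1n; ring.
move=> /(_ i2 p (conj Mp (conj p0 D0)) U W tU tW).
rewrite /dform1_at /dpol /interior /omega_chart /wedge /Lam /mk3 /=.
rewrite !big_ord3 /=.
rewrite /U /W !(pt3_i0, pt3_i1, pt3_i2) /xP /yP /zP.
rewrite !(mderivD, mderivB, mderivN, mderivM, mderivXU, mderiv_nat).
rewrite !(meval_mderivXn, meval_ringE, mevalXU) /p !(pt3_i0, pt3_i1, pt3_i2) /=.
rewrite !expr1n => dLam0.
have i_sq : 'i ^+ 2 + 1 = 0 :> F by rewrite sqrCi addNr.
have /eqP : 2 = 0 :> F.
  rewrite -dLam0; apply: (eq_modulo (c := - (2 * k%:R)) i_sq); field.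
  by rewrite addrC natr1 pnatr_eq0.
by rewrite pnatr_eq0.
Qed.

End SurfaceMk.

Theorem lemma4p5 (F : numClosedFieldType) (k : nat) :
  (* polynomial vector fields on M_k = the sum *)
  (forall V : vfield F, tangent_vf k V <->
     exists (g1 g2 g3 : {mpoly F[3]}) (c : 'I_k -> F),
       eqOnM k V
         (vf_add (vf_add (vf_add (vf_scale g1 (Vx F k)) (vf_scale g2 (Vy F k)))
                         (vf_scale g3 (Vz F k)))
                 (vf_scale (zpoly c) (Lam F k)))) /\
  (* the sum is direct *)
  (forall (g1 g2 g3 : {mpoly F[3]}) (c : 'I_k -> F),
     eqOnM k (vf_add (vf_add (vf_scale g1 (Vx F k)) (vf_scale g2 (Vy F k)))
                     (vf_scale g3 (Vz F k)))
             (vf_scale (zpoly c) (Lam F k)) ->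
     eqOnM k (vf_scale (zpoly c) (Lam F k)) (fun _ => 0)) /\
  (* V^x, V^y, V^z are Hamiltonian on M_k \ {0} *)
  hamiltonian k (Vx F k) /\ hamiltonian k (Vy F k) /\ hamiltonian k (Vz F k) /\
  (* Lambda is not symplectic *)
  ~ symplectic k (Lam F k).
Proof.
split.
  move=> V; split; first exact: tangent_vf_decomp.
  move=> [g1 [g2 [g3 [c eqV]]]]; apply: eqOnM_tangent_vf eqV _.
  by apply: tangent_vf_add; [apply: tangent_Vcomb | apply: tangent_zLam].
split; first exact: Vcomb_zLam_direct.
split; first exact: (hamiltonian_Vcoord F k i0).
split; first exact: (hamiltonian_Vcoord F k i1).
split; first exact: (hamiltonian_Vcoord F k i2).
exact: Lam_not_symplectic.
Qed.
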